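(* Let $a_0,a_1,a_2,a_3\in\mathbb{R}$ and for real $\lambda$ let $$\mathbf{M}_\lambda=\begin{bmatrix}1&\frac{a_3}{2}&\frac{a_2-\lambda}{2}\\[2pt] \frac{a_3}{2}&\lambda&\frac{a_1}{2}\\[2pt] \frac{a_2-\lambda}{2}&\frac{a_1}{2}&a_0\end{bmatrix}.$$ If $\lambda_i\in\mathbb{R}$ is such that the conic $\mathbf{M}_{\lambda_i}$ is a degenerate conic consisting of a complex conjugate line-pair, then $\operatorname{rank}\mathbf{M}_{\lambda_i}=2$ and $\lambda_i\ge \frac{a_3^2}{4}$.
   Context: A real symmetric $3\times3$ matrix $\mathbf{M}$ defines the conic $\{[u:v:w]\in\mathbb{P}^2(\mathbb{C}) : (u,v,w)\mathbf{M}(u,v,w)^T=0\}$. The conic ''consists of a complex conjugate line-pair'' if the quadratic form $(u,v,w)\mathbf{M}(u,v,w)^T$ factors as $\ell\,\bar\ell$ where $\ell$ is a linear form with complex coefficients not proportional to any real linear form and $\bar\ell$ is its complex conjugate. *)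

From HB Require Import structures.
From mathcomp Require Import all_boot all_order all_algebra.
From mathcomp Require Import complex.
Set Implicit Arguments. Unset Strict Implicit. Unset Printing Implicit Defensive.
Import Order.TTheory GRing.Theory Num.Theory.
Local Open Scope ring_scope.

Definition Mlam (R : rcfType) (a0 a1 a2 a3 l : R) : 'M[R]_3 :=
  \matrix_(i < 3, j < 3)
    nth 0 (nth [::] [:: [:: 1; a3 / 2; (a2 - l) / 2];
                        [:: a3 / 2; l; a1 / 2];
                        [:: (a2 - l) / 2; a1 / 2; a0]] i) j.

Definition qformC (R : rcfType) (M : 'M[R]_3) (x : 'I_3 -> R[i]) : R[i] :=
  \sum_(i < 3) \sum_(j < 3) x i * real_complex R (M i j) * x j.

Definition linformC (R : rcfType) (c : 'I_3 -> R[i]) (x : 'I_3 -> R[i]) : R[i] :=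
  \sum_(i < 3) c i * x i.

(* The conic M consists of a complex conjugate line-pair: its quadratic form
   factors as l * conj(l), with l a complex linear form not proportional to any
   real linear form. *)
Definition conj_line_pair (R : rcfType) (M : 'M[R]_3) : Prop :=
  exists c : 'I_3 -> R[i],
    (forall x : 'I_3 -> R[i],
        qformC M x = linformC c x * linformC (fun i => conjc (c i)) x)
    /\ ~ (exists (k : R[i]) (r : 'I_3 -> R),
            forall i, c i = k * real_complex R (r i)).

(* Write the complex linear form as p + i q with p, q real. On real points the
   quadratic form is then (p.x)^2 + (q.x)^2, so M_lambda is the Gram matrix
   p p^T + q q^T: its rank is at most 2, and its principal 2x2 minors are the
   squares (p_i q_j - p_j q_i)^2. The minor on rows {0, 1} is
   lambda - a3^2/4, hence nonnegative; and since the line is not proportional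
   to a real one, p and q are independent, so some minor is nonzero and the
   rank is exactly 2. *)
From HB Require Import structures.
From mathcomp Require Import all_boot all_order all_algebra.
From mathcomp Require Import complex.
From mathcomp Require Import ring lra.
Import Order.TTheory GRing.Theory Num.Theory.
Local Open Scope ring_scope.

Lemma sum_delta2 {V : pzSemiRingType} {n : nat} (F : 'I_n -> V) (i j : 'I_n) :
  \sum_k ((k == i)%:R + (k == j)%:R) * F k = F i + F j.
Proof.
under eq_bigr do rewrite mulrDl !mulr_natl !mulrb.
by rewrite big_split /= -!big_mkcond !big_pred1_eq.
Qed.

Lemma ord2E : (ord0 = 0 :> 'I_2) * (lift ord0 ord0 = 1 :> 'I_2).
Proof. by split; apply/val_inj. Qed.

Lemma det_mx22 {F : comRingType} (A : 'M[F]_2) :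
  \det A = A 0 0 * A 1 1 - A 0 1 * A 1 0.
Proof.
rewrite (expand_det_row _ 0) !big_ord_recl big_ord0 /cofactor !det_mx11 !mxE /=.
rewrite !ord2E (_ : lift 1 0 = 0); last exact: val_inj.
by rewrite expr0 expr1; ring.
Qed.

Lemma mxrank_mxsub {F : fieldType} {m n m' n' : nat}
    (f : 'I_m' -> 'I_m) (g : 'I_n' -> 'I_n) (A : 'M[F]_(m, n)) :
  (\rank (mxsub f g A) <= \rank A)%N.
Proof.
have -> : mxsub f g A = rowsub f 1%:M *m (A *m colsub g 1%:M).
  rewrite mulmx_colsub mul_rowsub_mx mul1mx mulmx1.
  by apply/matrixP => i j; rewrite !mxE.
exact: leq_trans (mxrankM_maxr _ _) (mxrankM_maxl _ _).
Qed.

Lemma mxrank_ge2_minor {F : fieldType} {n : nat} (A : 'M[F]_n) (i j : 'I_n) :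
  A i i * A j j - A i j * A j i != 0 -> (2 <= \rank A)%N.
Proof.
move=> minor_neq0; pose f (k : 'I_2) := if k == 0 then i else j.
have <- : \rank (mxsub f f A) = 2%N.
  by apply: mxrank_unit; rewrite unitmxE unitfE det_mx22 !mxE.
exact: mxrank_mxsub.
Qed.

Lemma mxrank_gram2 {F : fieldType} {n : nat} (P : 'M[F]_(n, 2)) :
  (\rank (P *m P^T) <= 2)%N.
Proof. exact: leq_trans (mxrankM_maxr _ _) (rank_leq_row _). Qed.

Lemma gram2_minor {F : comRingType} {n : nat} (P : 'M[F]_(n, 2)) (i j : 'I_n) :
  (P *m P^T) i i * (P *m P^T) j j - (P *m P^T) i j * (P *m P^T) j i
  = (P i 0 * P j 1 - P j 0 * P i 1) ^+ 2.
Proof. by rewrite !mxE !big_ord_recl !big_ord0 !mxE !ord2E; ring. Qed.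

Lemma reim_minor_neq0 {R : rcfType} {n : nat} (c : 'I_n -> R[i]) :
  ~ (exists (k : R[i]) (r : 'I_n -> R), forall i, c i = k * real_complex R (r i)) ->
  exists i j,
    complex.Re (c i) * complex.Im (c j) - complex.Re (c j) * complex.Im (c i) != 0.
Proof.
move=> nonreal.
case: (pickP (fun ij : 'I_n * 'I_n => complex.Re (c ij.1) * complex.Im (c ij.2)
                                     - complex.Re (c ij.2) * complex.Im (c ij.1) != 0)).
  by case=> i j minor_neq0; exists i, j.
move=> minors0; case: nonreal.
have minor0 i j : complex.Re (c i) * complex.Im (c j) = complex.Re (c j) * complex.Im (c i).
  by apply/eqP; rewrite -subr_eq0; apply/negbFE/(minors0 (i, j)).
case: (pickP (fun j => complex.Re (c j) != 0)) => [j Re_neq0 | Re0].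
  exists (1 +i* (complex.Im (c j) / complex.Re (c j)))%C, (fun i => complex.Re (c i)) => i.
  move: Re_neq0 (minor0 i j); case: (c i) (c j) => [a b] [a' b'] /= a'_neq0 minor; simpc.
  by congr (_ +i* _)%C; apply: (mulfI a'_neq0); rewrite -minor; field.
exists 'i%C, (fun i => complex.Im (c i)) => i.
by move: (Re0 i); case: (c i) => a b /= /negbFE/eqP ->; simpc.
Qed.

Section GramFactorization.
Context {R : rcfType}.
Implicit Types (M : 'M[R]_3) (c : 'I_3 -> R[i]).

Let delta2 (i j : 'I_3) : 'I_3 -> R[i] := fun k => (k == i)%:R + (k == j)%:R.

Lemma linformC_delta2 c i j : linformC c (delta2 i j) = c i + c j.
Proof.
rewrite /linformC -(sum_delta2 c i j).
by apply: eq_bigr => k _; rewrite mulrC.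
Qed.

Lemma qformC_delta2 M i j :
  qformC M (delta2 i j) = real_complex R (M i i + M i j + M j i + M j j).
Proof.
rewrite /qformC (eq_bigr (fun k => delta2 i j k * real_complex R (M k i + M k j))) => [|k _].
  by rewrite sum_delta2 -!rmorphD !addrA.
rewrite (eq_bigr (fun l => delta2 i j l * (delta2 i j k * real_complex R (M k l)))) => [|l _].
  by rewrite sum_delta2 rmorphD mulrDr.
by rewrite mulrC.
Qed.

Definition reim_mx c : 'M[R]_(3, 2) :=
  \matrix_(k, l) if l == 0 then complex.Re (c k) else complex.Im (c k).

Lemma gram_of_qformC M c : M^T = M ->
  (forall x, qformC M x = linformC c x * linformC (fun i => conjc (c i)) x) ->
  M = reim_mx c *m (reim_mx c)^T.
Proof.
move=> Msym factor.
have polar i j : M i i + M i j + M j i + M j j =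
    (complex.Re (c i) + complex.Re (c j)) ^+ 2 + (complex.Im (c i) + complex.Im (c j)) ^+ 2.
  have := factor (delta2 i j); rewrite qformC_delta2 !linformC_delta2.
  by case: (c i) (c j) => [a b] [a' b']; simpc => -[->] _ /=; ring.
apply/matrixP => i j; rewrite !mxE !big_ord_recl big_ord0 !mxE /=.
have := polar i j; have := polar i i; have := polar j j.
have -> : M j i = M i j by rewrite -[in LHS]Msym mxE.
lra.
Qed.

End GramFactorization.

Lemma trmx_Mlam {R : rcfType} (a0 a1 a2 a3 l : R) :
  (Mlam a0 a1 a2 a3 l)^T = Mlam a0 a1 a2 a3 l.
Proof. by apply/matrixP => -[[|[|[|?]]] ?] [[|[|[|?]]] ?]; rewrite !mxE. Qed.

Theorem lemma2 (R : rcfType) (a0 a1 a2 a3 li : R) :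
  conj_line_pair (Mlam a0 a1 a2 a3 li) ->
  \rank (Mlam a0 a1 a2 a3 li) = 2%N /\ a3 ^+ 2 / 4 <= li.
Proof.
case=> c [factor nonreal].
have gram := gram_of_qformC _ _ (trmx_Mlam a0 a1 a2 a3 li) factor.
split.
  apply/eqP; rewrite eqn_leq {1}gram mxrank_gram2 /=.
  have [i [j minor_neq0]] := reim_minor_neq0 c nonreal.
  apply: (mxrank_ge2_minor _ i j).
  by rewrite gram gram2_minor !mxE /= sqrf_eq0.
have := gram2_minor (reim_mx c) 0 1; rewrite -gram !mxE /= => minor01.
suff : 0 <= 1 * li - a3 / 2 * (a3 / 2) by lra.
by rewrite minor01 sqr_ge0.
Qed.
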